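(* Let $\Phi:I\to O$ be a quantum channel, with quantum confusability multigraph $\tilde S_\Phi\subseteq B(H_{in})\otimes O^{op}$ and quantum confusability graph $S_\Phi\subseteq B(H_{in})$. Then $$(\mathrm{id}\otimes\mathrm{tr})(\tilde S_\Phi)=S_\Phi.$$
   Context: All Hilbert spaces are finite dimensional; inner products are linear in the second variable. $H_{in}=\bigoplus_a H^a_{in}$, $H_{out}=\bigoplus_b H^b_{out}$, $I=\bigoplus_a B(H^a_{in})\subseteq B(H_{in})$, $O=\bigoplus_b B(H^b_{out})\subseteq B(H_{out})$, with traces $\mathrm{tr}$ inherited from $B(H_{in}),B(H_{out})$. A quantum channel is a trace-preserving completely positive map $\Phi:I\to O$; $\Phi^*:O\to I$ is its Hilbert–Schmidt adjoint. $e^a_i$ is an orthonormal basis of $H^a_{in}$, $e^a_{ij}$ the matrix units. $O^{op}$ is the opposite algebra of $O$ (product $a*b=ba$), with the same trace. $\mathcal{M}_\Phi=H_{in}\otimes O^{op}$ is the right Hilbert $O^{op}$-module with $(\xi\otimes a)*x=\xi\otimes(a*x)$, $\langle\xi\otimes a,\eta\otimes b\rangle_{O^{op}}=\langle\xi,\eta\rangle a^**b$; $\mathcal{L}(\mathcal{M}_\Phi)\cong B(H_{in})\otimes O^{op}$. $C_\Phi$ is the $O^{op}$-linear map with $C_\Phi(e^a_j\otimes1)=\sum_i e^a_i\otimes\Phi(e^a_{ji})$. A Stinespring module related to $\Phi$ is a pair $(\mathcal{E},W)$ with $\mathcal{E}$ a Hilbert $O^{op}$-module and $W$ an adjointable module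 map $\mathcal{M}_\Phi\to\mathcal{E}$ with $W^*W=C_\Phi$. The quantum confusability multigraph is $\tilde S_\Phi=W^*\mathcal{L}(\mathcal{E})W\subseteq\mathcal{L}(\mathcal{M}_\Phi)\cong B(H_{in})\otimes O^{op}$ for any Stinespring module $(\mathcal{E},W)$ (independent of the choice). The quantum confusability graph is $S_\Phi=V^*\pi(O)'V\subseteq B(H_{in})$, where $(\pi,V,K)$ is any Stinespring representation of $\Phi^*$ (i.e. $\pi:O\to B(K)$ a *-homomorphism, $V:H_{in}\to K$ an isometry, $\Phi^*(x)=V^*\pi(x)V$) and $\pi(O)'$ is the commutant of $\pi(O)$ in $B(K)$; it is independent of the chosen representation. $\mathrm{id}\otimes\mathrm{tr}:B(H_{in})\otimes O^{op}\to B(H_{in})$ is the partial trace. *)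

From HB Require Import structures.
From mathcomp Require Import all_boot all_order all_algebra.
From mathcomp Require Import complex.
From mathcomp Require Import reals.
Set Implicit Arguments. Unset Strict Implicit. Unset Printing Implicit Defensive.
Import Order.TTheory GRing.Theory Num.Theory.
Local Open Scope ring_scope.

Section QChannels.
Variable C : numClosedFieldType.

Definition mxadj m n (A : 'M[C]_(m, n)) : 'M[C]_(n, m) := (map_mx Num.conj A)^T.

(* Direct sum of full matrix algebras inside B(C^n): the basis vector e_i
   lies in the summand with label b i; the algebra consists of the
   block-diagonal matrices. *)
Definition blockalg n (b : 'I_n -> nat) : pred 'M[C]_n :=
  fun A => [forall i, forall j, (b i != b j) ==> (A i j == 0)].

Definition psd n (A : 'M[C]_n) : Prop :=
  forall v : 'cV[C]_n, 0 <= (mxadj v *m A *m v) 0 0.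

Definition psd_block n r (A : 'I_r -> 'I_r -> 'M[C]_n) : Prop :=
  forall v : 'I_r -> 'cV[C]_n,
    0 <= \sum_(s < r) \sum_(t < r) (mxadj (v s) *m A s t *m v t) 0 0.

Definition linear_on m n p q (P : pred 'M[C]_(m, n)) (f : 'M[C]_(m, n) -> 'M[C]_(p, q)) :=
  forall a x y, P x -> P y -> f (a *: x + y) = a *: f x + f y.

Definition quantum_channel nI (bI : 'I_nI -> nat) nO (bO : 'I_nO -> nat)
    (Phi : 'M[C]_nI -> 'M[C]_nO) : Prop :=
  [/\ forall x, x \in blockalg bI -> Phi x \in blockalg bO,
      linear_on (blockalg bI) Phi,
      forall x, x \in blockalg bI -> \tr (Phi x) = \tr x &
      (* complete positivity *)
      forall r (A : 'I_r -> 'I_r -> 'M[C]_nI),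
        (forall s t, A s t \in blockalg bI) -> psd_block A ->
        psd_block (fun s t => Phi (A s t))].

Definition hs_adjoint nI (bI : 'I_nI -> nat) nO (bO : 'I_nO -> nat)
    (Phi : 'M[C]_nI -> 'M[C]_nO) (Phis : 'M[C]_nO -> 'M[C]_nI) : Prop :=
  (forall y, y \in blockalg bO -> Phis y \in blockalg bI) /\
  (forall x y, x \in blockalg bI -> y \in blockalg bO ->
     \tr (mxadj (Phis y) *m x) = \tr (mxadj y *m Phi x)).

Definition star_hom nO (bO : 'I_nO -> nat) p (pi : 'M[C]_nO -> 'M[C]_p) : Prop :=
  [/\ linear_on (blockalg bO) pi,
      forall x y, x \in blockalg bO -> y \in blockalg bO -> pi (x *m y) = pi x *m pi y &
      forall x, x \in blockalg bO -> pi (mxadj x) = mxadj (pi x)].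

Definition stinespring_rep nI nO (bO : 'I_nO -> nat) (Psi : 'M[C]_nO -> 'M[C]_nI)
    p (pi : 'M[C]_nO -> 'M[C]_p) (V : 'M[C]_(p, nI)) : Prop :=
  [/\ star_hom bO pi, mxadj V *m V = 1%:M &
      forall x, x \in blockalg bO -> Psi x = mxadj V *m pi x *m V].

(* S_Phi = V^* pi(O)' V *)
Definition in_conf_graph nI nO (bO : 'I_nO -> nat) p (pi : 'M[C]_nO -> 'M[C]_p)
    (V : 'M[C]_(p, nI)) (Y : 'M[C]_nI) : Prop :=
  exists2 T : 'M[C]_p,
    (forall x, x \in blockalg bO -> T *m pi x = pi x *m T) & Y = mxadj V *m T *m V.

(* ---- Hilbert O^op-modules.  O^op has product a * b := b *m a. ---- *)
Definition hilbert_Oop_module nO (bO : 'I_nO -> nat) (E : lmodType C)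
    (ract : E -> 'M[C]_nO -> E) (ip : E -> E -> 'M[C]_nO) : Prop :=
  [/\ forall c (xi eta : E) a, a \in blockalg bO ->
        ract (c *: xi + eta) a = c *: ract xi a + ract eta a,
      forall c xi a b, a \in blockalg bO -> b \in blockalg bO ->
        ract xi (c *: a + b) = c *: ract xi a + ract xi b,
      (* xi * (a * b) = (xi * a) * b, with a * b = b a in O *)
      forall xi a b, a \in blockalg bO -> b \in blockalg bO ->
        ract xi (b *m a) = ract (ract xi a) b,
      forall xi, ract xi 1%:M = xi &
      [/\ forall xi eta, ip xi eta \in blockalg bO,
          forall c xi eta eta', ip xi (c *: eta + eta') = c *: ip xi eta + ip xi eta',
          (* <xi, eta * a> = <xi, eta> * a = a <xi, eta> *)
          forall xi eta a, a \in blockalg bO -> ip xi (ract eta a) = a *m ip xi eta,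
          forall xi eta, ip eta xi = mxadj (ip xi eta) &
          [/\ forall xi, psd (ip xi xi) &
              forall xi, ip xi xi = 0 -> xi = 0]]].

Definition in_LE nO (bO : 'I_nO -> nat) (E : lmodType C)
    (ract : E -> 'M[C]_nO -> E) (ip : E -> E -> 'M[C]_nO) (T : E -> E) : Prop :=
  [/\ forall c xi eta, T (c *: xi + eta) = c *: T xi + T eta,
      forall xi a, a \in blockalg bO -> T (ract xi a) = ract (T xi) a &
      exists T' : E -> E, forall xi eta, ip (T xi) eta = ip xi (T' eta)].

(* ---- The module M_Phi = H_in (x) O^op, H_in = C^nI: an element is
   f = sum_i e_i (x) f i, with f i in O. ---- *)
Definition inM nI nO (bO : 'I_nO -> nat) (f : 'I_nI -> 'M[C]_nO) : Prop :=
  forall i, f i \in blockalg bO.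
(* (xi (x) a) * x = xi (x) (a * x) = xi (x) (x a) *)
Definition Mract nI nO (f : 'I_nI -> 'M[C]_nO) (x : 'M[C]_nO) : 'I_nI -> 'M[C]_nO :=
  fun i => x *m f i.
(* <xi (x) a, eta (x) b> = <xi,eta> a^* * b = <xi,eta> b a^* *)
Definition Mip nI nO (f g : 'I_nI -> 'M[C]_nO) : 'M[C]_nO :=
  \sum_(i < nI) g i *m mxadj (f i).
Definition Mlin nI nO (c : C) (f g : 'I_nI -> 'M[C]_nO) : 'I_nI -> 'M[C]_nO :=
  fun i => c *: f i + g i.

(* L(M_Phi) = B(H_in) (x) O^op: X = sum_{i,j} e_ij (x) X i j, acting by
   (e_ij (x) x)(e_j (x) a) = e_i (x) (x * a) = e_i (x) (a x). *)
Definition Mact nI nO (X : 'I_nI -> 'I_nI -> 'M[C]_nO) (f : 'I_nI -> 'M[C]_nO) :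
  'I_nI -> 'M[C]_nO := fun i => \sum_(j < nI) f j *m X i j.

(* C_Phi = sum_a sum_{i,j} e^a_ij (x) Phi(e^a_ji) *)
Definition CPhi nI (bI : 'I_nI -> nat) nO (Phi : 'M[C]_nI -> 'M[C]_nO) :
  'I_nI -> 'I_nI -> 'M[C]_nO :=
  fun i j => if bI i == bI j then Phi (delta_mx j i) else 0.

Definition stinespring_module nI (bI : 'I_nI -> nat) nO (bO : 'I_nO -> nat)
    (Phi : 'M[C]_nI -> 'M[C]_nO) (E : lmodType C)
    (ract : E -> 'M[C]_nO -> E) (ip : E -> E -> 'M[C]_nO)
    (W : ('I_nI -> 'M[C]_nO) -> E) (Ws : E -> 'I_nI -> 'M[C]_nO) : Prop :=
  [/\ forall c f g, inM bO f -> inM bO g -> W (Mlin c f g) = c *: W f + W g,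
      forall f x, inM bO f -> x \in blockalg bO -> W (Mract f x) = ract (W f) x,
      forall xi, inM bO (Ws xi),
      forall f xi, inM bO f -> ip (W f) xi = Mip f (Ws xi) &
      (* W^* W = C_Phi *)
      forall f, inM bO f -> forall i, Ws (W f) i = Mact (CPhi bI Phi) f i].

(* X lies in the quantum confusability multigraph W^* L(E) W *)
Definition in_conf_multigraph nI nO (bO : 'I_nO -> nat) (E : lmodType C)
    (ract : E -> 'M[C]_nO -> E) (ip : E -> E -> 'M[C]_nO)
    (W : ('I_nI -> 'M[C]_nO) -> E) (Ws : E -> 'I_nI -> 'M[C]_nO)
    (X : 'I_nI -> 'I_nI -> 'M[C]_nO) : Prop :=
  (forall i j, X i j \in blockalg bO) /\
  exists2 T : E -> E, in_LE bO ract ip T &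
    forall f, inM bO f -> forall i, Mact X f i = Ws (T (W f)) i.

Definition ptrace nI nO (X : 'I_nI -> 'I_nI -> 'M[C]_nO) : 'M[C]_nI :=
  \matrix_(i, j) \tr (X i j).

End QChannels.

From HB Require Import structures.
From mathcomp Require Import all_boot all_order all_algebra.
From mathcomp Require Import complex.
From mathcomp Require Import reals.
From mathcomp Require boolp.
Set Implicit Arguments. Unset Strict Implicit. Unset Printing Implicit Defensive.
Import Order.TTheory GRing.Theory Num.Theory.
Local Open Scope ring_scope.

(* The trace of the O^op-valued inner product of E is a scalar product [sip], and the
   Gram identity [sip (W f) (W g) = Kvec f^* Kvec g], with Kvec f = sum_j pi (f j) V e_j,
   shows that W f |-> Kvec f is a well defined isometry from W(M_Phi) onto the subspace
   K = Kvec(M_Phi) of C^p, turning the right action of x in O into pi x.  Let P be the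
   orthogonal projection onto K; it commutes with pi(O), and it fixes V H_in because
   Phi^* is unital, so that pi 1 V = V.  The map U = W o Kvec^-1 o P and its adjoint
   [Ustar] intertwine pi(O) with the right action, hence T |-> Ustar T U maps L(E) into
   pi(O)' and T0 |-> U T0 Ustar maps pi(O)' into L(E); in both directions
   tr X_ij = sip (W (e_i (x) 1)) (T (W (e_j (x) 1))) = (V^* T0 V)_ij. *)

Section LinearIdentity.
Variables (R : pzRingType) (U V : lmodType R) (f : U -> V).
Hypothesis f_lin : forall c x y, f (c *: x + y) = c *: f x + f y.

Lemma lin0 : f 0 = 0.
Proof.
by have := f_lin 1 0 0; rewrite !scale1r addr0 => /esym/(canRL (addrK _)); rewrite subrr.
Qed.

Lemma linD x y : f (x + y) = f x + f y.
Proof. by have := f_lin 1 x y; rewrite !scale1r. Qed.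

Lemma linZ c x : f (c *: x) = c *: f x.
Proof. by rewrite -[c *: x]addr0 f_lin lin0 addr0. Qed.

Lemma lin_sum I (r : seq I) (P : pred I) (F : I -> U) :
  f (\sum_(i <- r | P i) F i) = \sum_(i <- r | P i) f (F i).
Proof. exact: (big_morph f linD lin0). Qed.

End LinearIdentity.

Section ConjugateTranspose.
Variable C : numClosedFieldType.

Lemma mxadjE m n (A : 'M[C]_(m, n)) i j : mxadj A i j = (A j i)^*.
Proof. by rewrite !mxE. Qed.

Lemma mxadjK m n (A : 'M[C]_(m, n)) : mxadj (mxadj A) = A.
Proof. by apply/matrixP => i j; rewrite !mxadjE conjCK. Qed.

Lemma mxadjM m n k (A : 'M[C]_(m, n)) (B : 'M[C]_(n, k)) :
  mxadj (A *m B) = mxadj B *m mxadj A.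
Proof. by rewrite /mxadj map_mxM trmx_mul. Qed.

Lemma mxadjD m n (A B : 'M[C]_(m, n)) : mxadj (A + B) = mxadj A + mxadj B.
Proof. by apply/matrixP => i j; rewrite !mxE rmorphD. Qed.

Lemma mxadjZ m n c (A : 'M[C]_(m, n)) : mxadj (c *: A) = c^* *: mxadj A.
Proof. by apply/matrixP => i j; rewrite !mxE rmorphM. Qed.

Lemma mxadj0 m n : mxadj (0 : 'M[C]_(m, n)) = 0.
Proof. by apply/matrixP => i j; rewrite !mxE rmorph0. Qed.

Lemma mxadjN m n (A : 'M[C]_(m, n)) : mxadj (- A) = - mxadj A.
Proof. by apply/matrixP => i j; rewrite !mxE rmorphN. Qed.

Lemma mxadj1 n : mxadj (1%:M : 'M[C]_n) = 1%:M.
Proof. by apply/matrixP => i j; rewrite !mxE eq_sym rmorphMn rmorph1. Qed.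

Lemma mxadj_sum m n I (r : seq I) (P : pred I) (F : I -> 'M[C]_(m, n)) :
  mxadj (\sum_(i <- r | P i) F i) = \sum_(i <- r | P i) mxadj (F i).
Proof. exact: (big_morph _ (@mxadjD m n) (@mxadj0 m n)). Qed.

Lemma mxadj_inv n (A : 'M[C]_n) : mxadj (invmx A) = invmx (mxadj A).
Proof. by rewrite /mxadj map_invmx trmx_inv. Qed.

Lemma mxadj_tr m n (A : 'M[C]_(m, n)) : mxadj A^T = (mxadj A)^T.
Proof. by apply/matrixP => i j; rewrite !mxE. Qed.

Lemma mxtrace_adj n (A : 'M[C]_n) : \tr (mxadj A) = (\tr A)^*.
Proof. by rewrite /mxtrace rmorph_sum; apply: eq_bigr => i _; rewrite mxadjE. Qed.

Lemma mxadj_delta m n (i : 'I_m) (j : 'I_n) :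
  mxadj (delta_mx i j : 'M[C]_(m, n)) = delta_mx j i.
Proof. by apply/matrixP => a b; rewrite !mxE rmorph_nat andbC. Qed.

Lemma mxtrace_mul_delta n (A : 'M[C]_n) i j : \tr (A *m delta_mx i j) = A j i.
Proof.
rewrite /mxtrace (bigD1 j) //= big1 => [|k /negbTE kNj]; last first.
  by rewrite mxE big1 // => l _; rewrite mxE kNj andbF mulr0.
rewrite mxE (bigD1 i) //= big1 => [|k /negbTE kNi]; last by rewrite mxE kNi mulr0.
by rewrite mxE !eqxx mulr1 !addr0.
Qed.

Lemma adj_delta_mulmx n (v : 'cV[C]_n) k : (mxadj (delta_mx k 0 : 'cV[C]_n) *m v) 0 0 = v k 0.
Proof. by rewrite mxadj_delta -rowE mxE. Qed.

Lemma adj_col_mulmx_col m n (A : 'M[C]_m) (B : 'M[C]_(m, n)) i j :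
  (mxadj (col i B) *m A *m col j B) 0 0 = (mxadj B *m A *m B) i j.
Proof. by rewrite !colE mxadjM -!mulmxA adj_delta_mulmx !mulmxA -colE mxE. Qed.

Lemma adj_mulmx_diag m n (N : 'M[C]_(m, n)) j :
  (mxadj N *m N) j j = \sum_k N k j * (N k j)^*.
Proof. by rewrite mxE; apply: eq_bigr => k _; rewrite mxadjE mulrC. Qed.

Lemma adj_mulmx_diag_eq0 m n (N : 'M[C]_(m, n)) j :
  (mxadj N *m N) j j = 0 -> forall i, N i j = 0.
Proof.
rewrite adj_mulmx_diag => /eqP; rewrite psumr_eq0 => [/allP N0 i|k _]; last first.
  exact: mul_conjC_ge0.
by apply/eqP; rewrite -mul_conjC_eq0; apply: N0; rewrite mem_index_enum.
Qed.

Lemma adj_mulmx_eq0 m n (N : 'M[C]_(m, n)) : mxadj N *m N = 0 -> N = 0.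
Proof.
move=> N0; apply/matrixP => i j; rewrite [RHS]mxE.
by apply: adj_mulmx_diag_eq0; rewrite N0 mxE.
Qed.

Lemma mxtrace_adj_mulmx_eq0 m n (N : 'M[C]_(m, n)) : \tr (mxadj N *m N) = 0 -> N = 0.
Proof.
move=> /eqP; rewrite psumr_eq0 => [/allP N0|j _]; last first.
  by rewrite adj_mulmx_diag sumr_ge0 // => k _; exact: mul_conjC_ge0.
apply/matrixP => i j; rewrite [RHS]mxE; apply: adj_mulmx_diag_eq0.
by apply/eqP; apply: N0; rewrite mem_index_enum.
Qed.

End ConjugateTranspose.

Section BlockAlgebra.
Variables (C : numClosedFieldType) (n : nat) (b : 'I_n -> nat).
Local Notation O := (blockalg (C:=C) b).

Lemma blockalgP (A : 'M[C]_n) : reflect (forall i j, b i != b j -> A i j = 0) (A \in O).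
Proof.
apply: (iffP forallP) => [A0 i j bij|A0 i]; last first.
  by apply/forallP => j; apply/implyP => bij; rewrite A0.
by have /forallP/(_ j) := A0 i; rewrite bij => /eqP.
Qed.

Fact blockalg_submod_closed : submod_closed O.
Proof.
split=> [|c A B /blockalgP A0 /blockalgP B0]; apply/blockalgP => i j bij.
  by rewrite mxE.
by rewrite !mxE A0 ?B0 // mulr0 addr0.
Qed.

HB.instance Definition _ :=
  GRing.isSubmodClosed.Build C 'M[C]_n O blockalg_submod_closed.

Lemma blockalg1 : 1%:M \in O.
Proof.
apply/blockalgP => i j bij; rewrite mxE.
by case: (eqVneq i j) bij => [->|_ _]; rewrite ?eqxx.
Qed.

Lemma blockalgM (A B : 'M[C]_n) : A \in O -> B \in O -> A *m B \in O.
Proof.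
move=> /blockalgP A0 /blockalgP B0; apply/blockalgP => i j bij.
rewrite mxE big1 // => k _; have [bik|bik] := eqVneq (b i) (b k).
  by rewrite B0 ?mulr0 // -bik.
by rewrite A0 ?mul0r.
Qed.

Lemma blockalg_adj (A : 'M[C]_n) : A \in O -> mxadj A \in O.
Proof.
by move=> /blockalgP A0; apply/blockalgP => i j bij; rewrite mxadjE A0 ?rmorph0 // eq_sym.
Qed.

Lemma blockalg_eq0_trace (D : 'M[C]_n) :
  D \in O -> (forall c, c \in O -> \tr (c *m D) = 0) -> D = 0.
Proof. by move=> DO D0; apply: mxtrace_adj_mulmx_eq0; rewrite D0 // blockalg_adj. Qed.

Lemma blockalg_delta s t : b s = b t -> delta_mx s t \in O.
Proof.
move=> bst; apply/blockalgP => i j bij; rewrite mxE.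
case: eqP => [eis|//]; case: eqP => [ejt|//].
by move: bij; rewrite eis ejt bst eqxx.
Qed.

Definition blockunit (s t : 'I_n) : 'M[C]_n := if b s == b t then delta_mx s t else 0.

Lemma blockunit_in s t : blockunit s t \in O.
Proof. by rewrite /blockunit; case: eqP => [/blockalg_delta|_] //; apply: rpred0. Qed.

Lemma blockalg_sum_blockunit A : A \in O -> A = \sum_s \sum_t A s t *: blockunit s t.
Proof.
move=> /blockalgP A0; rewrite {1}[A]matrix_sum_delta; apply: eq_bigr => s _.
apply: eq_bigr => t _; rewrite /blockunit; case: eqP => // /eqP bst.
by rewrite A0 // !scale0r.
Qed.

End BlockAlgebra.

Section OrthogonalProjection.
Variables (C : numClosedFieldType) (m p : nat) (S : 'M[C]_(m, p)).

Definition orthoproj : 'M[C]_p :=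
  (mxadj (row_base S) *m invmx (row_base S *m mxadj (row_base S)) *m row_base S)^T.

Lemma gram_row_base_unit : row_base S *m mxadj (row_base S) \in unitmx.
Proof.
rewrite -row_free_unit; apply: inj_row_free => v vG0.
have vB0 : mxadj (mxadj (v *m row_base S)) *m mxadj (v *m row_base S) = 0.
  by rewrite mxadjK mxadjM mulmxA -(mulmxA v) vG0 mul0mx.
apply/eqP; rewrite -(mulmx_free_eq0 _ (row_base_free S)).
by rewrite -[v *m _]mxadjK (adj_mulmx_eq0 vB0) mxadj0.
Qed.

Lemma orthoproj_adj : mxadj orthoproj = orthoproj.
Proof.
rewrite /orthoproj; move: (row_base S) => B.
by rewrite mxadj_tr !mxadjM mxadj_inv mxadjM !mxadjK mulmxA.
Qed.

Lemma orthoproj_id (v : 'cV[C]_p) : (v^T <= S)%MS -> orthoproj *m v = v.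
Proof.
rewrite -(eq_row_base S) => /submxP[D]; have := gram_row_base_unit.
rewrite /orthoproj; move: (row_base S) => B GU vD.
rewrite -[v]trmxK vD -trmx_mul !mulmxA -(mulmxA D B).
by rewrite -(mulmxA D _ (invmx _)) (mulmxV GU) mulmx1.
Qed.

Lemma orthoproj_sub (v : 'cV[C]_p) : ((orthoproj *m v)^T <= S)%MS.
Proof. by rewrite -(eq_row_base S) trmx_mul trmxK mulmxA submxMl. Qed.

End OrthogonalProjection.

Lemma mulmx_cVP (F : fieldType) m n (A B : 'M[F]_(m, n)) :
  (forall v : 'cV_n, A *m v = B *m v) -> A = B.
Proof.
by move=> AB; apply: trmx_inj; apply/eqP/mulmxP => u; rewrite -[u]trmxK -!trmx_mul AB.
Qed.

Section LinearMapMatrix.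
Variables (C : fieldType) (m n : nat) (F : 'cV[C]_n -> 'cV[C]_m).
Hypothesis F_lin : forall c a b, F (c *: a + b) = c *: F a + F b.

Definition cV_lin_mx : 'M[C]_(m, n) := \matrix_(k, l) F (delta_mx l 0) k 0.

Lemma mul_cV_lin_mx a : cV_lin_mx *m a = F a.
Proof.
rewrite [in RHS](matrix_sum_delta a) (lin_sum F_lin); apply/matrixP => k z.
rewrite ord1 !mxE summxE; apply: eq_bigr => l _.
by rewrite big_ord1 (linZ F_lin) !mxE mulrC.
Qed.

End LinearMapMatrix.

Section ConfusabilityGraphs.
Variable C : numClosedFieldType.
Variables (nI nO : nat) (bI : 'I_nI -> nat) (bO : 'I_nO -> nat).
Variables (Phi : 'M[C]_nI -> 'M[C]_nO) (Phis : 'M[C]_nO -> 'M[C]_nI).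
Hypotheses (Phi_channel : quantum_channel bI bO Phi) (Phi_adj : hs_adjoint bI bO Phi Phis).
Variables (E : lmodType C) (ract : E -> 'M[C]_nO -> E) (ip : E -> E -> 'M[C]_nO).
Variables (W : ('I_nI -> 'M[C]_nO) -> E) (Ws : E -> 'I_nI -> 'M[C]_nO).
Hypothesis E_hilbert : hilbert_Oop_module bO ract ip.
Hypothesis W_stinespring : stinespring_module bI bO Phi ract ip W Ws.
Variables (p : nat) (pi : 'M[C]_nO -> 'M[C]_p) (V : 'M[C]_(p, nI)).
Hypothesis pi_stinespring : stinespring_rep bO Phis pi V.

Local Notation O := (blockalg (C:=C) bO).
Local Notation M := (inM (C:=C) (nI:=nI) bO).

Lemma ip_in xi eta : ip xi eta \in O.
Proof. by case: E_hilbert => _ _ _ _ []. Qed.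

Lemma ip_adj xi eta : ip eta xi = mxadj (ip xi eta).
Proof. by case: E_hilbert => _ _ _ _ [_ _ _ ->]. Qed.

Lemma ip_linr xi c eta eta' : ip xi (c *: eta + eta') = c *: ip xi eta + ip xi eta'.
Proof. by case: E_hilbert => _ _ _ _ [_ ->]. Qed.

Lemma ip_linl c xi xi' eta : ip (c *: xi + xi') eta = c^* *: ip xi eta + ip xi' eta.
Proof. by rewrite ip_adj ip_linr mxadjD mxadjZ -!ip_adj. Qed.

Lemma ip_ractr xi eta a : a \in O -> ip xi (ract eta a) = a *m ip xi eta.
Proof. by case: E_hilbert => _ _ _ _ [_ _ ip_ract _ _]; apply: ip_ract. Qed.

Lemma ip_ractl xi eta a : a \in O -> ip (ract xi a) eta = ip xi eta *m mxadj a.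
Proof. by move=> aO; rewrite ip_adj ip_ractr // mxadjM -ip_adj. Qed.

Lemma ip_eq0_trace xi : (forall c, c \in O -> \tr (c *m ip xi xi) = 0) -> xi = 0.
Proof.
case: E_hilbert => _ _ _ _ [_ _ _ _ [_ ip_def]] xi0; apply: ip_def.
exact: blockalg_eq0_trace (ip_in xi xi) xi0.
Qed.

Lemma ip_eq_trace xi eta xi' eta' :
  (forall c, c \in O -> \tr (c *m ip xi eta) = \tr (c *m ip xi' eta')) ->
  ip xi eta = ip xi' eta'.
Proof.
move=> ip_tr; apply/eqP; rewrite -subr_eq0; apply/eqP.
apply: (@blockalg_eq0_trace _ _ bO) => [|c cO]; first by rewrite rpredB ?ip_in.
by rewrite mulmxBr (raddfB (@mxtrace _ _)) /= ip_tr ?subrr.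
Qed.

Definition sip xi eta := \tr (ip xi eta).

Lemma sip_adj xi eta : sip eta xi = (sip xi eta)^*.
Proof. by rewrite /sip ip_adj mxtrace_adj. Qed.

Lemma sip_ractl xi eta a : a \in O -> sip (ract xi (mxadj a)) eta = \tr (a *m ip xi eta).
Proof. by move=> aO; rewrite /sip ip_ractl ?blockalg_adj // mxadjK mxtrace_mulC. Qed.

Lemma sip_suml I (r : seq I) (c : I -> C) (F : I -> E) eta :
  sip (\sum_(k <- r) c k *: F k) eta = \sum_(k <- r) (c k)^* * sip (F k) eta.
Proof.
elim: r => [|k r IHr]; last by rewrite !big_cons -IHr /sip ip_linl mxtraceD mxtraceZ.
by rewrite !big_nil /sip ip_adj (lin0 (ip_linr eta)) mxadj0 mxtrace0.
Qed.

Lemma W_lin c f g : M f -> M g -> W (fun i => c *: f i + g i) = c *: W f + W g.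
Proof. by case: W_stinespring => W_lin _ _ _ _; apply: W_lin. Qed.

Lemma W_ract f x : M f -> x \in O -> W (Mract f x) = ract (W f) x.
Proof. by case: W_stinespring => _ W_ract _ _ _; apply: W_ract. Qed.

Lemma ip_W f xi : M f -> ip (W f) xi = Mip f (Ws xi).
Proof. by case: W_stinespring => _ _ _ ip_W _; apply: ip_W. Qed.

Lemma Ws_W f i : M f -> Ws (W f) i = Mact (CPhi bI Phi) f i.
Proof. by case: W_stinespring => _ _ _ _ Ws_W fM; apply: Ws_W. Qed.

Lemma inM_lin c f g : M f -> M g -> M (fun i => c *: f i + g i).
Proof. by move=> fM gM i; rewrite rpredD ?rpredZ. Qed.

Lemma inM_ract f x : M f -> x \in O -> M (Mract f x).
Proof. by move=> fM xO i; apply: blockalgM. Qed.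

Lemma inM_sum I (r : seq I) (c : I -> C) (F : I -> 'I_nI -> 'M[C]_nO) :
  (forall k, M (F k)) -> M (fun i => \sum_(k <- r) c k *: F k i).
Proof. by move=> FM i; apply: rpred_sum => k _; rewrite rpredZ ?FM. Qed.

Lemma W0 : W (fun=> 0) = 0.
Proof.
have M0 : M (fun=> 0) by move=> i; apply: rpred0.
have e : (fun=> 0) = (fun i : 'I_nI => 1 *: (0 : 'M[C]_nO) + 0).
  by apply: boolp.funext => i; rewrite scaler0 addr0.
by have := W_lin 1 M0 M0; rewrite /= -e scale1r => /esym/(canRL (addrK _)); rewrite subrr.
Qed.

Lemma W_sum I (r : seq I) (c : I -> C) (F : I -> 'I_nI -> 'M[C]_nO) :
  (forall k, M (F k)) ->
  W (fun i => \sum_(k <- r) c k *: F k i) = \sum_(k <- r) c k *: W (F k).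
Proof.
move=> FM; elim: r => [|k r IHr].
  rewrite big_nil -W0; congr W; apply: boolp.funext => i.
  by rewrite big_nil.
rewrite big_cons -IHr -W_lin ?FM //; last exact: inM_sum.
by congr W; apply: boolp.funext => i; rewrite big_cons.
Qed.

Definition Mbasis (i : 'I_nI) : 'I_nI -> 'M[C]_nO := fun j => if j == i then 1%:M else 0.

Lemma inM_basis i : M (Mbasis i).
Proof. by move=> j; rewrite /Mbasis; case: eqP => _; [apply: blockalg1 | apply: rpred0]. Qed.

Lemma Ws_basis xi i : Ws xi i = ip (W (Mbasis i)) xi.
Proof.
rewrite ip_W; last exact: inM_basis.
rewrite /Mip (bigD1 i) //= big1 => [|j /negbTE ji].
  by rewrite /Mbasis eqxx mxadj1 mulmx1 addr0.
by rewrite /Mbasis ji mxadj0 mulmx0.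
Qed.

Lemma Mact_basis X i j : Mact X (Mbasis j) i = X i j.
Proof.
rewrite /Mact (bigD1 j) //= big1 => [|k /negbTE kj]; first by rewrite /Mbasis eqxx mul1mx addr0.
by rewrite /Mbasis kj mul0mx.
Qed.

Lemma W_basis_decomp f : M f -> W f = \sum_j ract (W (Mbasis j)) (f j).
Proof.
move=> fM; transitivity (W (fun i => \sum_j 1 *: Mract (Mbasis j) (f j) i)).
  congr W; apply: boolp.funext => i; rewrite (bigD1 i) //= big1 => [|j /negbTE ij].
    by rewrite /Mract /Mbasis eqxx mulmx1 scale1r addr0.
  by rewrite /Mract /Mbasis eq_sym ij mulmx0 scaler0.
rewrite W_sum => [|j]; last exact: inM_ract (inM_basis j) (fM j).
by apply: eq_bigr => j _; rewrite scale1r W_ract //; apply: inM_basis.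
Qed.

Lemma pi_lin c x y : x \in O -> y \in O -> pi (c *: x + y) = c *: pi x + pi y.
Proof. by case: pi_stinespring => -[pi_lin _ _] _ _; apply: pi_lin. Qed.

Lemma piM x y : x \in O -> y \in O -> pi (x *m y) = pi x *m pi y.
Proof. by case: pi_stinespring => -[_ piM _] _ _; apply: piM. Qed.

Lemma pi_adj x : x \in O -> pi (mxadj x) = mxadj (pi x).
Proof. by case: pi_stinespring => -[_ _ pi_adj] _ _; apply: pi_adj. Qed.

Lemma V_isometry : mxadj V *m V = 1%:M.
Proof. by case: pi_stinespring. Qed.

Lemma PhisE x : x \in O -> Phis x = mxadj V *m pi x *m V.
Proof. by case: pi_stinespring => _ _ PhisE; apply: PhisE. Qed.

Lemma pi0 : pi 0 = 0.
Proof.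
have O0 : (0 : 'M[C]_nO) \in O by apply: rpred0.
have := pi_lin 1 O0 O0; rewrite !scale1r addr0.
by move=> /esym/(canRL (addrK _)); rewrite subrr.
Qed.

Lemma piD x y : x \in O -> y \in O -> pi (x + y) = pi x + pi y.
Proof. by move=> xO yO; have := pi_lin 1 xO yO; rewrite !scale1r. Qed.

Lemma piZ c x : x \in O -> pi (c *: x) = c *: pi x.
Proof. by move=> xO; rewrite -[c *: x]addr0 pi_lin ?rpred0 // pi0 addr0. Qed.

Lemma pi_sum I (r : seq I) (F : I -> 'M[C]_nO) :
  (forall k, F k \in O) -> pi (\sum_(k <- r) F k) = \sum_(k <- r) pi (F k).
Proof.
move=> FO; elim: r => [|k r IHr]; first by rewrite !big_nil pi0.
by rewrite !big_cons piD ?IHr ?FO ?rpred_sum.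
Qed.

Definition Kvec (f : 'I_nI -> 'M[C]_nO) : 'cV[C]_p := \sum_j pi (f j) *m col j V.

Lemma Kvec_lin c f g : M f -> M g -> Kvec (fun i => c *: f i + g i) = c *: Kvec f + Kvec g.
Proof.
move=> fM gM; rewrite /Kvec scaler_sumr -big_split; apply: eq_bigr => j _ /=.
by rewrite pi_lin // mulmxDl scalemxAl.
Qed.

Lemma Kvec_sum I (r : seq I) (c : I -> C) (F : I -> 'I_nI -> 'M[C]_nO) :
  (forall k, M (F k)) ->
  Kvec (fun i => \sum_(k <- r) c k *: F k i) = \sum_(k <- r) c k *: Kvec (F k).
Proof.
move=> FM; have Kvec_term j : pi (\sum_(k <- r) c k *: F k j) *m col j V =
    \sum_(k <- r) c k *: (pi (F k j) *m col j V).
  rewrite pi_sum; last by move=> k; rewrite rpredZ ?FM.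
  by rewrite mulmx_suml; apply: eq_bigr => k _; rewrite piZ ?FM // scalemxAl.
rewrite /Kvec (eq_bigr _ (fun j _ => Kvec_term j)) exchange_big.
by apply: eq_bigr => k _; rewrite scaler_sumr.
Qed.

Lemma Kvec_ract f x : M f -> x \in O -> Kvec (Mract f x) = pi x *m Kvec f.
Proof.
move=> fM xO; rewrite /Kvec mulmx_sumr; apply: eq_bigr => j _.
by rewrite /Mract piM // mulmxA.
Qed.

Lemma Phis_adj y : y \in O -> Phis (mxadj y) = mxadj (Phis y).
Proof.
by move=> yO; rewrite !PhisE ?blockalg_adj // pi_adj // !mxadjM mxadjK mulmxA.
Qed.

Lemma mxtrace_CPhi f g j i : f \in O -> g \in O ->
  \tr (g *m CPhi bI Phi j i *m mxadj f) = Phis (mxadj f *m g) j i.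
Proof.
move=> fO gO; have fgO : mxadj f *m g \in O by rewrite blockalgM ?blockalg_adj.
case: Phi_adj => Phis_in Phis_tr; rewrite /CPhi; case: eqP => [bji|/eqP bji] /=.
  rewrite mxtrace_mulC mulmxA.
  have := Phis_tr _ _ (blockalg_delta C (esym bji)) (blockalg_adj fgO).
  rewrite mxadjK => <-.
  by rewrite Phis_adj // mxadjK mxtrace_mul_delta.
by move/blockalgP: (Phis_in _ fgO) => ->; rewrite // mulmx0 mul0mx mxtrace0.
Qed.

Lemma sip_W f g : M f -> M g -> sip (W f) (W g) = (mxadj (Kvec f) *m Kvec g) 0 0.
Proof.
move=> fM gM; rewrite /sip ip_W // /Mip (raddf_sum (@mxtrace _ _)) /=.
rewrite /Kvec mxadj_sum mulmx_suml summxE; apply: eq_bigr => j _.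
rewrite Ws_W // /Mact mulmx_suml (raddf_sum (@mxtrace _ _)) /= mulmx_sumr summxE.
apply: eq_bigr => i _; rewrite mxtrace_CPhi // PhisE ?blockalgM ?blockalg_adj //.
by rewrite piM ?blockalg_adj // pi_adj // mxadjM -adj_col_mulmx_col !mulmxA.
Qed.

Lemma mxtrace_ip_W f g c : M f -> M g -> c \in O ->
  \tr (c *m ip (W f) (W g)) = (mxadj (Kvec f) *m (pi c *m Kvec g)) 0 0.
Proof.
move=> fM gM cO; rewrite -ip_ractr // -W_ract // -Kvec_ract //.
exact: sip_W (inM_ract gM cO).
Qed.

(* [W f] only depends on [Kvec f]: the Gram identity makes [W f - W g] isotropic. *)
Lemma W_Kvec_eq f g : M f -> M g -> Kvec f = Kvec g -> W f = W g.
Proof.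
move=> fM gM fg; have dM := inM_lin (-1) gM fM.
have : W (fun i => -1 *: g i + f i) = 0.
  apply: ip_eq0_trace => c cO; rewrite mxtrace_ip_W // Kvec_lin // fg.
  by rewrite scaleN1r addNr mxadj0 mul0mx mxE.
by rewrite W_lin // scaleN1r addrC => /subr0_eq.
Qed.

Lemma Phis_unital : Phis 1%:M = 1%:M.
Proof.
case: Phi_channel => _ _ Phi_tr _; case: Phi_adj => Phis_in Phis_tr.
have D0 : mxadj (Phis 1%:M) - 1%:M = 0.
  apply: (@blockalg_eq0_trace _ _ bI) => [|c cI].
    by rewrite rpredB ?blockalg_adj ?Phis_in ?blockalg1.
  rewrite mxtrace_mulC mulmxBl mul1mx (raddfB (@mxtrace _ _)) /=.
  by rewrite Phis_tr ?blockalg1 // mxadj1 mul1mx Phi_tr // subrr.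
by rewrite -[Phis _]mxadjK (subr0_eq D0) mxadj1.
Qed.

Lemma pi1_V : pi 1%:M *m V = V.
Proof.
have O1 := blockalg1 C bO.
have P_adj : mxadj (pi 1%:M) = pi 1%:M by rewrite -pi_adj // mxadj1.
have P_idem : pi 1%:M *m pi 1%:M = pi 1%:M by rewrite -piM // mulmx1.
have VPV : mxadj V *m pi 1%:M *m V = 1%:M by rewrite -PhisE // Phis_unital.
apply/eqP; rewrite -subr_eq0; apply/eqP/adj_mulmx_eq0.
rewrite mxadjD mxadjN mxadjM P_adj mulmxBl !mulmxBr V_isometry !mulmxA VPV.
by rewrite -(mulmxA (mxadj V)) P_idem VPV !subrr.
Qed.

Lemma Kvec_basis i : Kvec (Mbasis i) = col i V.
Proof.
rewrite /Kvec (bigD1 i) //= big1 => [|j /negbTE ji].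
  by rewrite /Mbasis eqxx colE mulmxA pi1_V -colE addr0.
by rewrite /Mbasis ji pi0 mul0mx.
Qed.

Definition Mblock (k : 'I_nI * 'I_nO * 'I_nO) : 'I_nI -> 'M[C]_nO :=
  fun i => if i == k.1.1 then blockunit C bO k.1.2 k.2 else 0.

Lemma inM_block k : M (Mblock k).
Proof. by move=> i; rewrite /Mblock; case: eqP => _; [apply: blockunit_in | apply: rpred0]. Qed.

Lemma Kvec_block j s t : Kvec (Mblock (j, s, t)) = pi (blockunit C bO s t) *m col j V.
Proof.
rewrite /Kvec (bigD1 j) //= big1 => [|i /negbTE ij]; first by rewrite /Mblock eqxx addr0.
by rewrite /Mblock ij pi0 mul0mx.
Qed.

Lemma Kvec_decomp f : M f ->
  Kvec f = \sum_j \sum_s \sum_t f j s t *: Kvec (Mblock (j, s, t)).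
Proof.
move=> fM; rewrite {1}/Kvec; apply: eq_bigr => j _.
rewrite {1}(blockalg_sum_blockunit (fM j)) pi_sum => [|s]; last first.
  by apply: rpred_sum => t _; rewrite rpredZ ?blockunit_in.
rewrite mulmx_suml; apply: eq_bigr => s _.
rewrite pi_sum => [|t]; last by rewrite rpredZ ?blockunit_in.
rewrite mulmx_suml; apply: eq_bigr => t _.
by rewrite Kvec_block piZ ?blockunit_in // scalemxAl.
Qed.

Definition Kspan : 'M[C]_(#|{: 'I_nI * 'I_nO * 'I_nO}|, p) :=
  \matrix_k (Kvec (Mblock (enum_val k)))^T.

Lemma Kvec_sub_Kspan f : M f -> ((Kvec f)^T <= Kspan)%MS.
Proof.
move=> fM; rewrite Kvec_decomp // raddf_sum /=; apply: summx_sub => j _.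
rewrite raddf_sum /=; apply: summx_sub => s _.
rewrite raddf_sum /=; apply: summx_sub => t _.
rewrite linearZ /= scalemx_sub // (_ : _^T = row (enum_rank (j, s, t)) Kspan) ?row_sub //.
by rewrite rowK enum_rankK.
Qed.

Local Notation P := (orthoproj Kspan).

Lemma P_Kvec f : M f -> P *m Kvec f = Kvec f.
Proof. by move=> fM; apply/orthoproj_id/Kvec_sub_Kspan. Qed.

Definition Klift (a : 'cV[C]_p) : 'I_nI -> 'M[C]_nO :=
  fun i => \sum_k ((P *m a)^T *m pinvmx Kspan) 0 k *: Mblock (enum_val k) i.

Lemma inM_Klift a : M (Klift a).
Proof. by apply: inM_sum => k; apply: inM_block. Qed.

Lemma Kvec_Klift a : Kvec (Klift a) = P *m a.
Proof.
rewrite Kvec_sum => [|k]; last exact: inM_block.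
set c := _ *m pinvmx Kspan.
rewrite -[RHS]trmxK -(mulmxKpV (orthoproj_sub Kspan a)) -/c mulmx_sum_row raddf_sum /=.
by apply: eq_bigr => k _; rewrite linearZ /= rowK trmxK.
Qed.

Lemma pi_P_comm x : x \in O -> pi x *m P = P *m pi x.
Proof.
have P_pi_P y : y \in O -> pi y *m P = P *m pi y *m P.
  move=> yO; apply: mulmx_cVP => a; have KaM := inM_Klift a.
  rewrite -!mulmxA -Kvec_Klift -Kvec_ract // P_Kvec //; exact: inM_ract.
move=> xO; have := P_pi_P _ (blockalg_adj xO); move/(congr1 (@mxadj C _ _)).
rewrite pi_adj // !mxadjM (mxadjK (pi x)) orthoproj_adj mulmxA => PpiP.
by rewrite P_pi_P // -PpiP.
Qed.

Definition U (a : 'cV[C]_p) : E := W (Klift a).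

Lemma U_lin c a b : U (c *: a + b) = c *: U a + U b.
Proof.
have [aM bM] := (inM_Klift a, inM_Klift b).
rewrite /U -W_lin //; apply: W_Kvec_eq; [exact: inM_Klift | exact: inM_lin |].
by rewrite Kvec_lin // !Kvec_Klift mulmxDr scalemxAr.
Qed.

Lemma U_pi x a : x \in O -> U (pi x *m a) = ract (U a) x.
Proof.
move=> xO; have aM := inM_Klift a; rewrite /U -W_ract //.
apply: W_Kvec_eq; [exact: inM_Klift | exact: inM_ract |].
by rewrite Kvec_ract // !Kvec_Klift !mulmxA pi_P_comm.
Qed.

Lemma U_col_V i : U (col i V) = W (Mbasis i).
Proof.
apply: W_Kvec_eq; [exact: inM_Klift | exact: inM_basis |].
by rewrite Kvec_Klift -Kvec_basis; exact: P_Kvec (inM_basis i).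
Qed.

Definition Ustar (eta : E) : 'cV[C]_p := \col_k sip (U (delta_mx k 0)) eta.

Lemma Ustar_lin c eta zeta : Ustar (c *: eta + zeta) = c *: Ustar eta + Ustar zeta.
Proof. by apply/matrixP => k z; rewrite !mxE /sip ip_linr mxtraceD mxtraceZ. Qed.

Lemma sip_U a eta : sip (U a) eta = (mxadj a *m Ustar eta) 0 0.
Proof.
have -> : U a = \sum_k a k 0 *: U (delta_mx k 0).
  rewrite {1}[a]matrix_sum_delta (lin_sum U_lin); apply: eq_bigr => k _.
  by rewrite big_ord1 (linZ U_lin).
by rewrite sip_suml mxE; apply: eq_bigr => k _; rewrite mxadjE !mxE.
Qed.

Lemma Ustar_ract x eta : x \in O -> Ustar (ract eta x) = pi x *m Ustar eta.
Proof.
move=> xO; apply/matrixP => k z; rewrite ord1 mxE /sip ip_ractr // -sip_ractl //.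
rewrite -U_pi ?blockalg_adj // sip_U pi_adj // mxadjM mxadjK -mulmxA.
exact: adj_delta_mulmx.
Qed.

Lemma Ustar_W_basis i : Ustar (W (Mbasis i)) = col i V.
Proof.
apply/matrixP => k z; rewrite ord1 mxE /U sip_W; [|exact: inM_Klift | exact: inM_basis].
rewrite Kvec_Klift mxadjM orthoproj_adj -mulmxA (P_Kvec (inM_basis i)) Kvec_basis.
exact: adj_delta_mulmx.
Qed.

Lemma conf_multigraph_ptrace X :
  in_conf_multigraph bO ract ip W Ws X -> in_conf_graph bO pi V (ptrace X).
Proof.
case=> _ [T [T_lin T_ract _] WsT].
pose F a := Ustar (T (U a)).
have F_lin c a b : F (c *: a + b) = c *: F a + F b by rewrite /F U_lin T_lin Ustar_lin.
exists (cV_lin_mx F) => [x xO|].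
  apply: mulmx_cVP => a; rewrite -!mulmxA !mul_cV_lin_mx //.
  by rewrite /F U_pi // T_ract // Ustar_ract.
apply/matrixP => i j; rewrite /ptrace mxE -adj_col_mulmx_col -mulmxA mul_cV_lin_mx //.
by rewrite /F -sip_U !U_col_V -Mact_basis WsT ?Ws_basis //; exact: inM_basis.
Qed.

Definition Uconj (T0 : 'M[C]_p) (eta : E) : E := U (T0 *m Ustar eta).

Lemma Uconj_lin T0 c xi eta : Uconj T0 (c *: xi + eta) = c *: Uconj T0 xi + Uconj T0 eta.
Proof. by rewrite /Uconj Ustar_lin mulmxDr -scalemxAr U_lin. Qed.

Lemma sip_Uconj T0 xi eta : sip (Uconj T0 xi) eta = sip xi (Uconj (mxadj T0) eta).
Proof.
rewrite /Uconj sip_U [RHS]sip_adj sip_U -mxadjE mxadjM (mxadjM (mxadj _)).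
by rewrite (mxadjK (_ *m _)) !mulmxA.
Qed.

Section Commutant.
Variable T0 : 'M[C]_p.
Hypothesis T0_comm : forall x, x \in O -> T0 *m pi x = pi x *m T0.

Lemma commutant_adj x : x \in O -> mxadj T0 *m pi x = pi x *m mxadj T0.
Proof.
move=> xO; apply: (can_inj (@mxadjK _ _ _)).
by rewrite !mxadjM mxadjK -!pi_adj // T0_comm ?blockalg_adj.
Qed.

Lemma Uconj_ract xi a : a \in O -> Uconj T0 (ract xi a) = ract (Uconj T0 xi) a.
Proof. by move=> aO; rewrite /Uconj Ustar_ract // mulmxA T0_comm // -mulmxA U_pi. Qed.

End Commutant.

Lemma Uconj_in_LE T0 : (forall x, x \in O -> T0 *m pi x = pi x *m T0) ->
  in_LE bO ract ip (Uconj T0).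
Proof.
move=> T0_comm; split=> [c xi eta|xi a aO|]; [exact: Uconj_lin | exact: Uconj_ract |].
exists (Uconj (mxadj T0)) => xi eta; apply: ip_eq_trace => c cO.
rewrite -!ip_ractr // -Uconj_ract //; last exact: commutant_adj.
exact: sip_Uconj.
Qed.

Lemma conf_graph_multigraph Y : in_conf_graph bO pi V Y ->
  exists2 X, in_conf_multigraph bO ract ip W Ws X & ptrace X = Y.
Proof.
case=> T0 T0_comm ->.
exists (fun i j => ip (W (Mbasis i)) (Uconj T0 (W (Mbasis j)))).
  split=> [i j|]; first exact: ip_in.
  exists (Uconj T0); first exact: Uconj_in_LE.
  move=> f fM i; rewrite Ws_basis (W_basis_decomp fM) (lin_sum (Uconj_lin T0)).
  rewrite (lin_sum (ip_linr _)) /Mact; apply: eq_bigr => j _.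
  by rewrite Uconj_ract // ip_ractr.
apply/matrixP => i j; rewrite /ptrace mxE -adj_col_mulmx_col -[\tr _]/(sip _ _).
rewrite sip_adj sip_U !Ustar_W_basis -mxadjE (mxadjM (mxadj _)).
by rewrite (mxadjK (_ *m _)) mulmxA.
Qed.

End ConfusabilityGraphs.

Theorem proposition3p15 (R : realType)
    (nI : nat) (bI : 'I_nI -> nat) (nO : nat) (bO : 'I_nO -> nat)
    (Phi : 'M[R[i]]_nI -> 'M[R[i]]_nO) (Phis : 'M[R[i]]_nO -> 'M[R[i]]_nI) :
  quantum_channel bI bO Phi ->
  hs_adjoint bI bO Phi Phis ->
  forall (E : vectType R[i]) (ract : E -> 'M[R[i]]_nO -> E) (ip : E -> E -> 'M[R[i]]_nO)
         (W : ('I_nI -> 'M[R[i]]_nO) -> E) (Ws : E -> 'I_nI -> 'M[R[i]]_nO),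
  hilbert_Oop_module bO ract ip ->
  stinespring_module bI bO Phi ract ip W Ws ->
  forall (p : nat) (pi : 'M[R[i]]_nO -> 'M[R[i]]_p) (V : 'M[R[i]]_(p, nI)),
  stinespring_rep bO Phis pi V ->
  forall Y : 'M[R[i]]_nI,
    (exists2 X, in_conf_multigraph bO ract ip W Ws X & ptrace X = Y) <->
    in_conf_graph bO pi V Y.
Proof.
move=> Phi_channel Phi_adj E ract ip W Ws E_hilbert W_stinespring p pi V pi_stinespring Y.
split=> [[X XS <-]|YS].
  exact (conf_multigraph_ptrace Phi_channel Phi_adj E_hilbert W_stinespring pi_stinespring XS).
exact (conf_graph_multigraph Phi_channel Phi_adj E_hilbert W_stinespring pi_stinespring YS).
Qed.
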